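(* Let $\mathbb{K}$ be a field of characteristic zero, let $\mathfrak{g}=(V,\mu)$ be a non-perfect Lie algebra over $\mathbb{K}$ with $\dim V=n$, and let $t\in\mathbb{K}\setminus\{0,1\}$. Then $$\dim\Omega(\mathfrak{g})\leq \widehat{\phi}_{n,t}(\mathfrak{g})\leq \dim\Omega(\mathfrak{g})+\dim L\big(\mathfrak{g}^{(2)};\mathcal{Z}(\mathfrak{g})\cap\mathfrak{g}^{(2)}\big).$$
   Context: $\mathfrak{g}^{(2)}$ is the linear span of all products $\mu(X,Y)$; non-perfect means $\mathfrak{g}^{(2)}\neq\mathfrak{g}$. $\mathcal{Z}(\mathfrak{g})=\{X:\mu(X,Y)=0\ \forall Y\}$ is the center. $L(U;W)$ is the space of linear maps $U\to W$. $\Omega(\mathfrak{g})=\{T\in L(V;V): \operatorname{Im}T\subseteq\mathcal{Z}(\mathfrak{g}),\ \mathfrak{g}^{(2)}\subseteq\operatorname{Ker}T\}$. $\widehat{\phi}_{n,t}(\mathfrak{g})=\dim\mathcal{D}(t,1,0)(\mathfrak{g})$, where $\mathcal{D}(t,1,0)(\mathfrak{g})$ is the space of linear maps $D:V\to V$ with $tD\mu(X,Y)=\mu(DX,Y)$ for all $X,Y\in V$. *)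

From HB Require Import structures.
From mathcomp Require Import all_boot all_order all_algebra.
From Stdlib Require Import ClassicalEpsilon.
Set Implicit Arguments. Unset Strict Implicit. Unset Printing Implicit Defensive.
Import GRing.Theory.
Local Open Scope ring_scope.


Section Defs.
Variables (K : fieldType) (V : vectType K).

(* The subspace of a finite-dimensional space vT whose elements are exactly
   those satisfying P (chosen by classical choice; meaningful when P is a
   linear subspace, which is the case for all uses below). *)
Definition vspace_of (vT : vectType K) (P : vT -> Prop) : {vspace vT} :=
  epsilon (inhabits 0%VS) (fun U : {vspace vT} => forall v, v \in U <-> P v).

Definition is_lie_bracket (mu : V -> V -> V) : Prop :=
  [/\ (forall (a : K) x y z, mu (a *: x + y)%R z = (a *: mu x z + mu y z)%R),
      (forall (a : K) x y z, mu x (a *: y + z)%R = (a *: mu x y + mu x z)%R),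
      (forall x, mu x x = 0) &
      (forall x y z, mu x (mu y z) + mu y (mu z x) + mu z (mu x y) = 0)].

Definition derived (mu : V -> V -> V) : {vspace V} :=
  vspace_of (fun v : V => forall W : {vspace V},
                 (forall X Y, mu X Y \in W) -> v \in W).

Definition center (mu : V -> V -> V) : {vspace V} :=
  vspace_of (fun X : V => forall Y, mu X Y = 0).

Definition Omega (mu : V -> V -> V) : {vspace 'End(V)} :=
  vspace_of (fun T : 'End(V) =>
    (forall X, T X \in center mu) /\ (forall X, X \in derived mu -> T X = 0)).

Definition Dt10 (mu : V -> V -> V) (t : K) : {vspace 'End(V)} :=
  vspace_of (fun D : 'End(V) => forall X Y, t *: D (mu X Y) = mu (D X) Y).

Definition phi_hat (mu : V -> V -> V) (t : K) : nat := \dim (Dt10 mu t).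

Definition dimL_derived_center (mu : V -> V -> V) : nat :=
  \dim (fullv : {vspace 'Hom(subvs_of (derived mu),
                              subvs_of (center mu :&: derived mu)%VS)}).

End Defs.

(* Put mu X Y = [X, Y]. The inclusion Omega(g) <= D(t,1,0)(g) holds for every t: such a T kills
   both sides of t T[X,Y] = [T X, Y]. For the upper bound, take D in D(t,1,0)(g). Then
   [D X, Y] = [X, D Y], and [[D X, Y], Z] = t^2 D[[X, Y], Z], so the three cyclic terms of this
   triple bracket add up to 0. Applying the Jacobi identity to (D X, Y, Z) gives a second linear
   relation between the same terms, and together they force (1 - t) [[D X, Y], Z] = 0. Hence
   D[X, Y] = t^-1 [D X, Y] is central, i.e. D maps g^(2) into Z(g) /\ g^(2). Now restrict to g^(2):
   the image of D(t,1,0)(g) lies in L(g^(2); Z(g) /\ g^(2)), and a D in the kernel kills g^(2),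
   so [D X, Y] = t D[X, Y] = 0 and D is in Omega(g). Rank-nullity gives the bound. *)
From HB Require Import structures.
From mathcomp Require Import all_boot all_order all_algebra.
From mathcomp Require Import zify.
From Stdlib Require Import ClassicalEpsilon Classical.
Set Implicit Arguments.
Unset Strict Implicit.
Unset Printing Implicit Defensive.
Import GRing.Theory.
Local Open Scope ring_scope.

Section VspaceOf.
Variables (K : fieldType) (vT : vectType K) (P : vT -> Prop).
Hypotheses (P0 : P 0) (P_lin : forall a u v, P u -> P v -> P (a *: u + v)).

Lemma dimv_lt_addv_line (U : {vspace vT}) v :
  v \notin U -> (\dim U < \dim (U + <[v]>))%N.
Proof. by rewrite (ltn_leqif (dimv_leqif_sup (addvSl U _))) subv_add subvv. Qed.

Lemma addv_line_closed (U : {vspace vT}) v :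
  (forall u, u \in U -> P u) -> P v -> forall w, w \in (U + <[v]>)%VS -> P w.
Proof.
move=> PU Pv _ /memv_addP[u uU [_ /vlineP[a ->] ->]].
by rewrite addrC; apply: P_lin => //; apply: PU.
Qed.

Lemma vspace_of_or_extend (U : {vspace vT}) : (forall u, u \in U -> P u) ->
  (forall v, v \in U <-> P v) \/ exists2 v, P v & v \notin U.
Proof.
move=> PU; case: (classic (exists2 v, P v & v \notin U)); first by right.
move=> noV; left=> v; split=> [|Pv]; first exact: PU.
by apply: contraT => vNU; exfalso; apply: noV; exists v.
Qed.

Lemma exists_vspace_of : exists W : {vspace vT}, forall v, v \in W <-> P v.
Proof.
suff grow k (U : {vspace vT}) : (\dim {:vT} - \dim U <= k)%N ->
    (forall u, u \in U -> P u) -> exists W : {vspace vT}, forall v, v \in W <-> P v.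
  by apply: (grow _ 0%VS (leqnn _)) => u /vlineP[a ->]; rewrite scaler0.
elim: k U => [|k IH] U Uk PU; have [defU | [v Pv vNU]] := vspace_of_or_extend PU.
all: try by exists U.
all: have := dimv_lt_addv_line vNU; have := dimvS (subvf (U + <[v]>)).
- by lia.
- by move=> ? ?; apply: (IH (U + <[v]>)%VS); [lia | apply: addv_line_closed].
Qed.

Lemma vspace_ofP v : v \in vspace_of P <-> P v.
Proof.
have [W defW] := exists_vspace_of.
by apply: (epsilon_spec (inhabits 0%VS) (fun U : {vspace vT} => forall v, v \in U <-> P v));
  exists W.
Qed.

End VspaceOf.

Section LieAlgebra.
Variables (K : fieldType) (V : vectType K) (mu : V -> V -> V).
Hypothesis lie_mu : is_lie_bracket mu.

Lemma lie_linearPl a x y z : mu (a *: x + y) z = a *: mu x z + mu y z.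
Proof. by case: lie_mu. Qed.

Lemma lie_linearPr a x y z : mu x (a *: y + z) = a *: mu x y + mu x z.
Proof. by case: lie_mu. Qed.

Lemma lie_jacobi x y z : mu x (mu y z) + mu y (mu z x) + mu z (mu x y) = 0.
Proof. by case: lie_mu. Qed.

Lemma lie0l z : mu 0 z = 0.
Proof. by have := lie_linearPl (-1) 0 0 z; rewrite scaler0 addr0 scaleN1r addNr. Qed.

Lemma lieZl a x z : mu (a *: x) z = a *: mu x z.
Proof. by have := lie_linearPl a x 0 z; rewrite !addr0 lie0l addr0. Qed.

Lemma lieDl x y z : mu (x + y) z = mu x z + mu y z.
Proof. by have := lie_linearPl 1 x y z; rewrite !scale1r. Qed.

Lemma lieDr x y z : mu z (x + y) = mu z x + mu z y.
Proof. by have := lie_linearPr 1 z x y; rewrite !scale1r. Qed.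

Lemma lie_skew x y : mu x y = - mu y x.
Proof.
case: lie_mu => _ _ lie_xx _; apply/eqP; rewrite -addr_eq0.
by have := lie_xx (x + y); rewrite lieDl !lieDr !lie_xx add0r addr0 => ->.
Qed.

Lemma lie_jacobi_left x y z : mu (mu x y) z + mu (mu y z) x + mu (mu z x) y = 0.
Proof.
rewrite (lie_skew (mu x y)) (lie_skew (mu y z)) (lie_skew (mu z x)) -!opprD.
by rewrite -addrA addrC lie_jacobi oppr0.
Qed.

Lemma centerP x : x \in center mu <-> forall y, mu x y = 0.
Proof.
apply: vspace_ofP => [y|a u v Hu Hv y]; first exact: lie0l.
by rewrite lie_linearPl Hu Hv scaler0 addr0.
Qed.

Lemma derivedP x :
  x \in derived mu <-> forall W : {vspace V}, (forall y z, mu y z \in W) -> x \in W.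
Proof.
apply: vspace_ofP => [W _|a u v Hu Hv W HW]; first exact: mem0v.
by rewrite memvD ?memvZ ?Hu ?Hv.
Qed.

Lemma lie_derived x y : mu x y \in derived mu.
Proof. by apply/derivedP => W; apply. Qed.

Lemma derived_min (W : {vspace V}) :
  (forall x y, mu x y \in W) -> (derived mu <= W)%VS.
Proof. by move=> HW; apply/subvP => x /derivedP; apply. Qed.

Lemma OmegaP T :
  T \in Omega mu <->
  (forall x, T x \in center mu) /\ (forall x, x \in derived mu -> T x = 0).
Proof.
apply: vspace_ofP => [|a T1 T2 [T1Z T1D] [T2Z T2D]].
  by split=> [x|x _]; rewrite lfunE ?mem0v.
split=> [x|x Dx]; rewrite add_lfunE scale_lfunE; first by rewrite memvD ?memvZ.
by rewrite T1D // T2D // scaler0 addr0.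
Qed.

Lemma Dt10P t D : D \in Dt10 mu t <-> forall x y, t *: D (mu x y) = mu (D x) y.
Proof.
apply: vspace_ofP => [x y|a D1 D2 HD1 HD2 x y]; first by rewrite !lfunE scaler0 lie0l.
rewrite !add_lfunE !scale_lfunE lie_linearPl scalerDr -HD1 -HD2.
by rewrite scalerA mulrC -scalerA.
Qed.

Lemma Omega_sub_Dt10 t : (Omega mu <= Dt10 mu t)%VS.
Proof.
apply/subvP => T /OmegaP[TZ TD]; apply/Dt10P => x y.
by rewrite TD ?lie_derived // scaler0; have /centerP -> := TZ x.
Qed.

Section Dt10Map.
Variables (t : K) (D : 'End(V)).
Hypothesis D_Dt10 : forall x y, t *: D (mu x y) = mu (D x) y.

Lemma Dt10_lie_sym x y : mu (D x) y = mu x (D y).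
Proof.
by rewrite (lie_skew x) -[mu (D y) x]D_Dt10 (lie_skew y) linearN scalerN opprK D_Dt10.
Qed.

Lemma Dt10_lie_lie x y z : mu (mu (D x) y) z = (t * t) *: D (mu (mu x y) z).
Proof. by rewrite -D_Dt10 lieZl -D_Dt10 scalerA. Qed.

Lemma Dt10_lie_lie_eq0 : t != 1 -> forall x y z, mu (mu (D x) y) z = 0.
Proof.
move=> t_neq1 x y z; pose f x y z := mu (mu (D x) y) z.
have f_cyclic x' y' z' : f x' y' z' + f y' z' x' + f z' x' y' = 0.
  by rewrite /f !Dt10_lie_lie -!scalerDr -!linearD lie_jacobi_left linear0 scaler0.
have f_jacobi x' y' z' : f y' z' x' + t *: f z' x' y' + t *: f x' y' z' = 0.
  have e1 : t *: mu (D x') (mu y' z') = - f y' z' x'.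
    by rewrite -D_Dt10 /f Dt10_lie_lie scalerA (lie_skew x') linearN scalerN.
  have e2 : mu y' (mu z' (D x')) = - f z' x' y' by rewrite /f -Dt10_lie_sym lie_skew.
  have e3 : mu z' (mu (D x') y') = - f x' y' z' by rewrite /f lie_skew.
  have /eqP := congr1 (fun v => t *: v) (lie_jacobi (D x') y' z').
  by rewrite !scalerDr e1 e2 e3 scaler0 !scalerN -!opprD oppr_eq0 => /eqP.
(* (1 - t) f x y z is f_jacobi z x y, rewritten with f_cyclic z x y. *)
have : (1 - t) *: f x y z = 0.
  rewrite scalerBl scale1r -(f_jacobi z x y) -addrA; congr (_ + _).
  rewrite -scalerDr -scalerN; congr (_ *: _); apply/eqP.
  by rewrite eq_sym -addr_eq0 addrC -(f_cyclic z x y) addrA addrC addrA.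
by move/eqP; rewrite scaler_eq0 subr_eq0 eq_sym (negbTE t_neq1) => /eqP.
Qed.

Lemma Dt10_derived_center : t != 0 -> t != 1 ->
  forall x, x \in derived mu -> D x \in (center mu :&: derived mu)%VS.
Proof.
move=> t_neq0 t_neq1 x; rewrite memv_preim; move: x; apply/subvP/derived_min => y z.
rewrite -memv_preim memv_cap.
have -> : D (mu y z) = t^-1 *: mu (D y) z by rewrite -D_Dt10 scalerA mulVf // scale1r.
apply/andP; split; last by rewrite memvZ ?lie_derived.
apply/centerP => w.
by rewrite lieZl Dt10_lie_lie_eq0 // scaler0.
Qed.

Lemma Dt10_Omega : (forall x, x \in derived mu -> D x = 0) -> D \in Omega mu.
Proof.
move=> D_derived0; apply/OmegaP; split=> // x; apply/centerP => y.
by rewrite -D_Dt10 D_derived0 ?lie_derived // scaler0.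
Qed.

End Dt10Map.

Definition res_derived (f : 'End(V)) :
    'Hom(subvs_of (derived mu), subvs_of (center mu :&: derived mu)%VS) :=
  (linfun (vsproj (center mu :&: derived mu)%VS) \o f \o linfun vsval)%VF.

Lemma res_derivedE f u :
  res_derived f u = vsproj (center mu :&: derived mu)%VS (f (vsval u)).
Proof. by rewrite !comp_lfunE !lfunE. Qed.

Fact res_derived_is_linear : linear res_derived.
Proof.
move=> a f g; apply/lfunP => u.
by rewrite add_lfunE scale_lfunE !res_derivedE add_lfunE scale_lfunE linearP.
Qed.

HB.instance Definition _ := GRing.isSemilinear.Build K 'End(V) _ _ res_derived
  (GRing.semilinear_linear res_derived_is_linear).

Lemma Dt10_ker_res_sub_Omega t : t != 0 -> t != 1 ->
  (Dt10 mu t :&: lker (linfun res_derived) <= Omega mu)%VS.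
Proof.
move=> t_neq0 t_neq1; apply/subvP => D.
rewrite memv_cap memv_ker lfunE /= => /andP[/Dt10P D_Dt10 /eqP resD0].
apply: (Dt10_Omega D_Dt10) => x Dx.
rewrite -(vsprojK (Dt10_derived_center D_Dt10 t_neq0 t_neq1 Dx)) -(vsprojK Dx).
by rewrite -res_derivedE resD0 zero_lfunE linear0.
Qed.

End LieAlgebra.

Theorem theorem4p1 (K : fieldType) (V : vectType K) (n : nat)
    (mu : V -> V -> V) (t : K) :
  [pchar K] =i pred0 ->
  is_lie_bracket mu ->
  \dim (fullv : {vspace V}) = n ->
  derived mu != fullv ->
  t != 0 -> t != 1 ->
  (\dim (Omega mu) <= phi_hat mu t <= \dim (Omega mu) + dimL_derived_center mu)%N.
Proof.
move=> _ lie_mu _ _ t_neq0 t_neq1.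
apply/andP; split; first exact/dimvS/(Omega_sub_Dt10 lie_mu t).
rewrite /phi_hat -(limg_ker_dim (linfun (res_derived mu)) (Dt10 mu t)).
apply: leq_add; last exact/dimvS/subvf.
exact/dimvS/(Dt10_ker_res_sub_Omega lie_mu t_neq0 t_neq1).
Qed.
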